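(* Let $s>0$ and let $c$ be a constant. Suppose $g\in C^1[s,\infty)$ satisfies $$g'(t)=-g(t)+\frac1t\int_s^t g(\xi)\,d\xi+\frac ct,\qquad t\in[s,\infty).$$ Then for all $t\ge s$, $$g(t)=g'(s)\,s\,e^{s}\,I(t,s)+g(s),$$ where $g'(s)=-g(s)+c\,s^{-1}$.
   Context: $I(t,s)=\int_s^t \frac{e^{-\xi}}{\xi}\,d\xi$. *)

From Stdlib Require Import Reals.
From Coquelicot Require Import Coquelicot.
Open Scope R_scope.

Definition I (t s : R) : R := RInt (fun xi => exp (- xi) / xi) s t.

Definition continuous_on_Ici (f : R -> R) (s : R) : Prop :=
  forall t, s <= t ->
    filterlim f (within (fun x => s <= x) (locally t)) (locally (f t)).

(* g is C^1 on [s, +oo) with derivative dg: g is continuous on [s,+oo),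
   differentiable on (s,+oo) with derivative dg, and dg extends continuously
   to [s,+oo) (so dg s is the one-sided derivative at s). *)
Definition C1_Ici (g dg : R -> R) (s : R) : Prop :=
  continuous_on_Ici g s /\ continuous_on_Ici dg s /\
  (forall t, s < t -> is_derive g t (dg t)).

(** With [G t = \int_s^t g], the equation reads [t g' = -t g + G + c]. The
    right-hand side has derivative [-t g'], so [t g'(t) e^t] is constant,
    i.e. [g'(t) = s g'(s) e^s e^(-t) / t]; integrating from [s] gives the
    formula. Both steps use that a function with zero derivative on [(s, +oo)]
    which is right-continuous at [s] is constant on [[s, +oo)]. *)

From Stdlib Require Import Reals Lra.
From Coquelicot Require Import Coquelicot.
Open Scope R_scope.

(* [Rmax s] extends a function on [[s, +oo)] constantly to the left; this turns
   one-sided continuity at [s] into the two-sided continuity that the mean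
   value theorem asks for. *)
Lemma filterlim_Rmax_within s x :
  filterlim (Rmax s) (locally x) (within (Rle s) (locally (Rmax s x))).
Proof.
  intros P [eps HP]. exists eps. intros y Hy. apply HP; [|apply Rmax_l].
  change (Rabs (Rmax s y - Rmax s x) < eps).
  change (Rabs (y - x) < eps) in Hy.
  unfold Rmax in *; destruct (Rle_dec s y), (Rle_dec s x);
    unfold Rabs in *; repeat destruct Rcase_abs; lra.
Qed.

Lemma continuous_Rmax s x : continuous (Rmax s) x.
Proof. exact (filterlim_filter_le_2 _ (filter_le_within _) (filterlim_Rmax_within s x)). Qed.

Lemma continuous_on_Ici_Rmax (f : R -> R) s :
  continuous_on_Ici f s -> forall x, continuous (fun y => f (Rmax s y)) x.
Proof.
  intros Hf x.
  eapply filterlim_comp; [apply filterlim_Rmax_within | apply Hf, Rmax_l].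
Qed.

Lemma derive_0_const_Ici (F : R -> R) s :
  continuous (fun x => F (Rmax s x)) s ->
  (forall t, s < t -> is_derive F t 0) ->
  forall t, s <= t -> F t = F s.
Proof.
  intros Hc HF t Ht.
  set (Fm := fun x => F (Rmax s x)).
  assert (HFm : forall x, s < x -> is_derive Fm x 0).
  { intros x Hx. apply (is_derive_ext_loc F); [|exact (HF x Hx)].
    apply (filter_imp (fun y => s < y)); [|exact (open_gt s x Hx)].
    intros y Hy. unfold Fm. rewrite Rmax_right; lra. }
  destruct (MVT_gen Fm s t (fun _ => 0)) as [x [_ Hx]]; simpl in *.
  - rewrite Rmin_left, Rmax_right by lra. intros x Hx. apply HFm; lra.
  - rewrite Rmin_left, Rmax_right by lra. intros x [Hsx _].
    apply continuity_pt_filterlim.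
    destruct (Req_dec x s) as [->|Hxs]; [exact Hc|].
    apply (ex_derive_continuous (K:=R_AbsRing) (V:=R_NormedModule)).
    exists 0. apply HFm. lra.
  - unfold Fm in Hx. rewrite Rmax_right, Rmax_left in Hx by lra. lra.
Qed.

Lemma is_derive_RInt_Ici (f : R -> R) s t :
  continuous_on_Ici f s -> s < t -> is_derive (RInt f s) t (f t).
Proof.
  intros Hf Ht.
  assert (Hfm := continuous_on_Ici_Rmax f s Hf).
  assert (Hnear : locally t (fun y => s < y)) by exact (open_gt s t Ht).
  apply (is_derive_RInt f (RInt f s) s).
  - apply (filter_imp (fun y => s < y)); [|exact Hnear].
    intros b Hb. apply (RInt_correct (V:=R_CompleteNormedModule)).
    apply (ex_RInt_ext (fun y => f (Rmax s y)) f s b).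
    + rewrite Rmin_left, (Rmax_right s b) by lra. intros x Hx. rewrite Rmax_right; lra.
    + apply (ex_RInt_continuous (V:=R_CompleteNormedModule)). intros; apply Hfm.
  - apply (continuous_ext_loc f (fun y => f (Rmax s y))); [|exact (Hfm t)].
    apply (filter_imp (fun y => s < y)); [|exact Hnear].
    intros y Hy. rewrite Rmax_right; lra.
Qed.

Lemma is_derive_I s t : 0 < s -> 0 < t -> is_derive (fun u => I u s) t (exp (- t) / t).
Proof.
  intros Hs Ht. unfold I.
  set (f := fun xi => exp (- xi) / xi).
  assert (Hf : forall x, 0 < x -> continuous f x).
  { intros x Hx. apply (ex_derive_continuous (K:=R_AbsRing) (V:=R_NormedModule)).
    unfold f. auto_derive. lra. }
  apply (is_derive_RInt f (RInt f s) s); [|exact (Hf t Ht)].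
  apply (filter_imp (fun y => 0 < y)); [|exact (open_gt 0 t Ht)].
  intros b Hb. apply (RInt_correct (V:=R_CompleteNormedModule)).
  apply (ex_RInt_continuous (V:=R_CompleteNormedModule)). intros x Hx. apply Hf.
  assert (0 < Rmin s b) by (apply Rmin_glb_lt; lra). lra.
Qed.

Section IntegroDifferentialEquation.

Variables (s c : R) (g dg : R -> R).
Hypothesis s_pos : 0 < s.
Hypothesis g_C1 : C1_Ici g dg s.
Hypothesis g_eqn : forall t, s <= t -> dg t = - g t + (1 / t) * RInt g s t + c / t.

Lemma dg_at_s : dg s = - g s + c / s.
Proof.
  rewrite (g_eqn s), (RInt_point s g) by lra.
  change (zero : R) with 0. field. lra.
Qed.

Lemma mul_dg_exp_const t : s <= t -> t * dg t * exp t = s * dg s * exp s.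
Proof.
  destruct g_C1 as [Hg [Hdg Hd]].
  apply (derive_0_const_Ici (fun t => t * dg t * exp t)).
  - apply (continuous_mult (fun y => Rmax s y * dg (Rmax s y)) (fun y => exp (Rmax s y))).
    + apply (continuous_mult (Rmax s) (fun y => dg (Rmax s y))).
      * apply continuous_Rmax.
      * apply continuous_on_Ici_Rmax, Hdg.
    + apply continuous_exp_comp, continuous_Rmax.
  - clear t. intros t Ht.
    assert (HK : forall y, s < y ->
      (- y * g y + RInt g s y + c) * exp y = y * dg y * exp y).
    { intros y Hy. rewrite (g_eqn y) by lra. field. lra. }
    apply (is_derive_ext_loc (fun y => (- y * g y + RInt g s y + c) * exp y)).
    { apply (filter_imp (fun y => s < y)); [exact HK | exact (open_gt s t Ht)]. }
    assert (Dg := Hd t Ht).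
    assert (DG := is_derive_RInt_Ici g s t Hg Ht).
    assert (Ht_eq : - t * g t + RInt g s t + c = t * dg t).
    { rewrite (g_eqn t) by lra. field. lra. }
    (* Abstracting the integral stops [auto_derive] from differentiating [RInt]
       itself, which would require two-sided continuity of [g]. *)
    generalize (RInt g s) DG Ht_eq. clear DG Ht_eq. intros G DG Ht_eq.
    auto_derive.
    + repeat split; eexists; eassumption.
    + rewrite (is_derive_unique (fun x : R => g x) _ _ Dg),
        (is_derive_unique (fun x : R => G x) _ _ DG), Ht_eq.
      ring.
Qed.

Lemma dg_closed_form t : s <= t -> dg t = dg s * s * exp s * (exp (- t) / t).
Proof.
  intros Ht.
  assert (Hexp := exp_pos t).
  assert (HK := mul_dg_exp_const t Ht).
  rewrite exp_Ropp.
  replace (dg s * s * exp s) with (t * dg t * exp t) by (rewrite HK; ring).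
  field. lra.
Qed.

Lemma g_closed_form t : s <= t -> g t = dg s * s * exp s * I t s + g s.
Proof.
  destruct g_C1 as [Hg [_ Hd]].
  set (C := dg s * s * exp s).
  intros Ht.
  enough (HL : g t - C * I t s = g s - C * I s s).
  { unfold I at 2 in HL. rewrite RInt_point in HL. change (zero : R) with 0 in HL. lra. }
  apply (derive_0_const_Ici (fun u => g u - C * I u s)); [| |exact Ht].
  - apply (continuous_minus (fun y => g (Rmax s y)) (fun y => C * I (Rmax s y) s)).
    + apply continuous_on_Ici_Rmax, Hg.
    + apply (continuous_scal_r C (fun y => I (Rmax s y) s)).
      apply (continuous_comp (Rmax s) (fun u => I u s)); [apply continuous_Rmax|].
      apply (ex_derive_continuous (K:=R_AbsRing) (V:=R_NormedModule)).
      eexists. apply is_derive_I; [lra|]. rewrite Rmax_left; lra.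
  - clear t Ht. intros t Ht.
    assert (Dg := Hd t Ht).
    assert (DI := is_derive_I s t s_pos ltac:(lra)).
    auto_derive.
    + repeat split; eexists; eassumption.
    + rewrite (is_derive_unique (fun x : R => g x) _ _ Dg),
        (is_derive_unique (fun x : R => I x s) _ _ DI), (dg_closed_form t) by lra.
      unfold C. ring.
Qed.

End IntegroDifferentialEquation.

Theorem lemma1 (s c : R) (g dg : R -> R) :
  0 < s ->
  C1_Ici g dg s ->
  (forall t, s <= t ->
     dg t = - g t + (1 / t) * RInt g s t + c / t) ->
  (forall t, s <= t -> g t = dg s * s * exp s * I t s + g s)
  /\ dg s = - g s + c / s.
Proof.
  intros Hs Hg Heq. split.
  - intros t Ht. exact (g_closed_form s c g dg Hs Hg Heq t Ht).
  - exact (dg_at_s s c g dg Hs Heq).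
Qed.
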